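(* Let $m\ge 0$, let $v$ be a derangement of order $m$, and let $n\ge m$. Then the map ${\bf\Phi}=\phi_1\circ\phi_2\circ\cdots\circ\phi_n$ defined below is a bijection of $\mathrm{Sh}(0^{n-m}v)$ onto itself, and for every $w\in\mathrm{Sh}(0^{n-m}v)$, $$\mathrm{RISE}\,w=\mathrm{RISE}^\bullet\,{\bf\Phi}(w).$$
   Context: Words have nonnegative integer letters. For a word $w=x_1\cdots x_n$: $\mathrm{RISE}\,w=\{i:1\le i\le n,\ x_i\le x_{i+1}\}$ with the convention $x_{n+1}=+\infty$ (so $n\in\mathrm{RISE}\,w$). $\mathrm{Pos}\,w$ is the subword of positive letters of $w$. For a word $v$ of positive integers of length $m\le n$, $\mathrm{Sh}(0^{n-m}v)$ is the set of words of length $n$ having exactly $n-m$ letters equal to $0$ and with $\mathrm{Pos}\,w=v$. A derangement of order $m$ is a word $y_1\cdots y_m$ that is a permutation of $1,2,\dots,m$ with $y_i\neq i$ for all $i$. Excedance: let $v$ be a derangement of order $m$ and $w=x_1\cdots x_n\in\mathrm{Sh}(0^{n-m}v)$. For each position $k$ with $x_k>0$, let $\mathrm{red}(k)$ be the number of positive letters among $x_1,\dots,x_k$. The positive letter $x_k$ is excedent if $x_k>\mathrm{red}(k)$ and subexcedent if $x_k<\mathrm{red}(k)$ (one of these always holds). A letter is non-subexcedent if it is $0$ or excedent. The fictitious letters $x_0=x_{n+1}=+\infty$ are regarded as excedent (hence non-subexcedent). $\mathrm{RISE}^\bullet w$ is the set of $i$, $1\le i\le n$, such that one of the following holds: (1)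 $0<x_i<x_{i+1}$; (2) $x_i=x_{i+1}=0$; (3) $x_i=0$ and $x_{i+1}$ is excedent; (4) $x_i$ is subexcedent and $x_{i+1}=0$. The maps $\phi_l$ ($1\le l\le n$) on $\mathrm{Sh}(0^{n-m}v)$: if $l>n-m$, $\phi_l(w)=w$. If $1\le l\le n-m$, let $j$ be the position of the $l$-th letter equal to $0$ in $w$, read from left to right. (a) If $x_{j-1}$ and $x_{j+1}$ are both non-subexcedent, $\phi_l(w)=w$. (b) If $x_{j-1}$ is non-subexcedent and $x_{j+1}$ is subexcedent, or if both are subexcedent with $x_{j-1}>x_{j+1}$: let $k$ be the greatest integer $k\ge j+1$ with $x_{j+1}<x_{j+2}<\cdots<x_k<\mathrm{red}(k)$, and set $\phi_l(w)=x_1\cdots x_{j-1}\,x_{j+1}\cdots x_k\,0\,x_{k+1}\cdots x_n$. (c) If $x_{j-1}$ is subexcedent and $x_{j+1}$ is non-subexcedent, or if both are subexcedent with $x_{j-1}<x_{j+1}$: let $i$ be the smallest integer $i\le j-1$ with $\mathrm{red}(i)>x_i>x_{i+1}>\cdots>x_{j-1}$, and set $\phi_l(w)=x_1\cdots x_{i-1}\,0\,x_i\cdots x_{j-1}\,x_{j+1}\cdots x_n$. Finally ${\bf\Phi}(w)=\phi_1(\phi_2(\cdots\phi_n(w)\cdots))$. *)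

(* Words are sequences of natural numbers; positions are
   1-indexed as in the paper: letter i of w is  nth 0 w i.-1  for 1 <= i <= n. *)
From mathcomp Require Import all_boot.
Set Implicit Arguments. Unset Strict Implicit. Unset Printing Implicit Defensive.

Definition word := seq nat.

Definition ltr (w : word) (i : nat) : nat := nth 0 w i.-1.

(* x_i as an extended letter: None stands for the fictitious +infinity
   (positions 0 and n+1, or any position outside 1..n). *)
Definition xlt (w : word) (i : nat) : option nat :=
  if (1 <= i <= size w) then Some (ltr w i) else None.

Definition olt (a b : option nat) : bool :=
  match a, b with
  | Some a, Some b => a < b
  | Some _, None => true
  | None, _ => false
  end.
Definition ole (a b : option nat) : bool :=
  match a, b with
  | Some a, Some b => a <= b
  | _, None => true
  | None, Some _ => false
  end.

(* RISE w = { i : 1 <= i <= n, x_i <= x_{i+1} }, with x_{n+1} = +oo,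
   represented as the increasing list of its elements. *)
Definition RISE (w : word) : seq nat :=
  [seq i <- iota 1 (size w) | ole (xlt w i) (xlt w i.+1)].

Definition Pos (w : word) : word := [seq x <- w | 0 < x].

Definition derangement (v : word) : bool :=
  perm_eq v (iota 1 (size v)) &&
  all (fun i => nth 0 v i != i.+1) (iota 0 (size v)).

Definition Sh (n : nat) (v : word) : pred word :=
  [pred w : word | [&& size w == n, count_mem 0 w == n - size v & Pos w == v]].

Definition red (w : word) (k : nat) : nat := count (fun x => 0 < x) (take k w).

(* excedent / subexcedent; fictitious positions (outside 1..n) are excedent *)
Definition exc (w : word) (k : nat) : bool :=
  if (1 <= k <= size w) then (0 < ltr w k) && (red w k < ltr w k) else true.
Definition subexc (w : word) (k : nat) : bool :=
  (1 <= k <= size w) && (0 < ltr w k) && (ltr w k < red w k).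
Definition nonsub (w : word) (k : nat) : bool :=
  if (1 <= k <= size w) then (ltr w k == 0) || exc w k else true.

Definition RISEb (w : word) : seq nat :=
  [seq i <- iota 1 (size w) |
     [|| (0 < ltr w i) && olt (xlt w i) (xlt w i.+1),
         (xlt w i == Some 0) && (xlt w i.+1 == Some 0),
         (ltr w i == 0) && exc w i.+1
       | subexc w i && (xlt w i.+1 == Some 0)]].

Definition zpos (w : word) (l : nat) : nat :=
  nth 0 [seq t <- iota 1 (size w) | ltr w t == 0] l.-1.

Definition chain_b (w : word) (j k : nat) : bool :=
  all (fun t => ltr w t < ltr w t.+1) (iota j.+1 (k - j.+1)) && (ltr w k < red w k).
Definition chain_c (w : word) (j i : nat) : bool :=
  (ltr w i < red w i) && all (fun t => ltr w t > ltr w t.+1) (iota i (j.-1 - i)).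

Definition phi (n m l : nat) (w : word) : word :=
  if (l < 1) || (n - m < l) then w else
  let j := zpos w l in
  let nl := nonsub w j.-1 in let nr := nonsub w j.+1 in
  let sl := subexc w j.-1 in let sr := subexc w j.+1 in
  if nl && nr then w
  else if (nl && sr) || [&& sl, sr & ltr w j.+1 < ltr w j.-1] then
    let k := last j.+1 [seq k <- iota j.+1 (n - j) | chain_b w j k] in
    take j.-1 w ++ drop j (take k w) ++ 0 :: drop k w
  else if (sl && nr) || [&& sl, sr & ltr w j.-1 < ltr w j.+1] then
    let i := head j.-1 [seq i <- iota 1 j.-1 | chain_c w j i] in
    take i.-1 w ++ 0 :: drop i.-1 (take j.-1 w) ++ drop j w
  else w.

Definition Phi (n m : nat) (w : word) : word :=
  foldr (phi n m) w (iota 1 n).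

From mathcomp Require Import all_boot zify.
Set Implicit Arguments. Unset Strict Implicit. Unset Printing Implicit Defensive.

(* For w in Sh(0^{n-m} v) the positive letter at position k has red(k) = 1 + (index of the letter
   in v), so being subexcedent is a property of the letter alone, and two positive letters of w
   separated only by zeros are consecutive in v.  Hence phi_l either fixes w or moves its l-th zero
   across a maximal run of subexcedent letters, increasing to the right in case (b) and decreasing
   to the left in case (c).  The letters around the zero in phi_l(w) tell which case occurred and
   where the zero came from, so phi_l is injective on the finite set Sh(0^{n-m} v), hence
   bijective.  Phi treats the zeros from right to left; after the l-th zero has been treated, the
   rises of w are those of the current word, read with RISE to the left of its l-th zero and with
   RISE^bullet from there on.  Each step only changes letters and tests between two consecutive
   zeros, and after the last step only the positive prefix before the first zero is still read
   with RISE, where both tests agree. *)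

Ltac decide_ifs := repeat match goal with |- context [if ?c then _ else _] =>
  first [ have -> : c = true by lia | have -> : c = false by lia ] end.

Lemma last_filter_iota_max (P : pred nat) a b : 0 < b -> P a ->
  let k := last a [seq i <- iota a b | P i] in
  [/\ a <= k < a + b, P k & forall i, k < i < a + b -> ~~ P i].
Proof.
case: b => // b _ Pa; elim: b => [|b IH]; first by rewrite /= Pa /=; split => //; lia.
rewrite -[b.+2]addn1 iotaD filter_cat last_cat /= addn1.
move: IH; set k := last a _ => -[hk Pk kmax].
case hP: (P (a + b.+1)) => /=; first by split => //; lia.
split => //; first lia.
move=> i hi; case: (ltnP i (a + b.+1)) => hi'; first by apply: kmax; lia.
by rewrite (_ : i = a + b.+1) ?hP //; lia.
Qed.

Lemma head_filter_iota_min (P : pred nat) a b d : 0 < b -> P (a + b).-1 ->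
  let k := head d [seq i <- iota a b | P i] in
  [/\ a <= k < a + b, P k & forall i, a <= i < k -> ~~ P i].
Proof.
elim: b a => [//|b IH] a _ hP /=.
case Pa: (P a) => /=; first by split => //; lia.
case: b IH hP => [|b] IH hP; first by rewrite addn1 /= Pa in hP.
have [||hk Pk kmin] := IH a.+1; [by [] | by rewrite addSn -addnS |].
split => //; first lia.
move=> i hi; case: (eqVneq i a) => [->|ia]; first by rewrite Pa.
by apply: kmin; lia.
Qed.

Lemma map_ltr (u : word) : map (ltr u) (iota 1 (size u)) = u.
Proof. by rewrite (iotaDl 1 0) -map_comp -[RHS](mkseq_nth 0). Qed.

Lemma ltr_cons x u t : 0 < t -> ltr (x :: u) t.+1 = ltr u t.
Proof. by case: t. Qed.

Definition zeros (u : word) k := count (fun t => ltr u t == 0) (iota 1 k).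

Lemma zerosD u a b :
  zeros u (a + b) = zeros u a + count (fun t => ltr u t == 0) (iota a.+1 b).
Proof. by rewrite /zeros iotaD count_cat add1n. Qed.

Lemma zeros_cons x u k : zeros (x :: u) k.+1 = (x == 0) + zeros u k.
Proof.
rewrite /zeros /= (iotaDl 1 1) count_map; congr (_ + _).
by apply: eq_in_count => t; rewrite mem_iota /= => /andP[t1 _]; rewrite ltr_cons.
Qed.

Lemma zeros_size u : zeros u (size u) = count_mem 0 u.
Proof. by rewrite /zeros -{3}(map_ltr u) count_map. Qed.

Lemma leq_zeros u a b : a <= b -> zeros u a <= zeros u b.
Proof. by move=> ab; rewrite -(subnKC ab) zerosD leq_addr. Qed.

Lemma zeros_eq_pos u a b : a <= b ->
  zeros u b = zeros u a <-> (forall t, a < t <= b -> 0 < ltr u t).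
Proof.
move=> ab; rewrite -(subnKC ab) zerosD; set c := count _ _.
have -> : (zeros u a + c = zeros u a) <-> ~~ has (fun t => ltr u t == 0) (iota a.+1 (b - a)).
  by rewrite has_count -/c; split; lia.
split=> [/hasPn h t ht | h]; first by rewrite lt0n; apply: h; rewrite mem_iota; lia.
by apply/hasPn => t; rewrite mem_iota -lt0n => ht; apply: h; lia.
Qed.

Lemma zeros_ext (u u' : word) k : (forall t, 0 < t <= k -> ltr u t = ltr u' t) ->
  zeros u k = zeros u' k.
Proof. by move=> h; apply: eq_in_count => t; rewrite mem_iota /= => ht; rewrite h //; lia. Qed.

Lemma zposE u l j : 0 < l -> 0 < j <= size u -> ltr u j = 0 -> zeros u j.-1 = l.-1 ->
  zpos u l = j.
Proof.
move=> l0 hj uj0 hz; rewrite /zpos.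
rewrite (_ : size u = j.-1 + (size u - j).+1) ?iotaD ?filter_cat; last lia.
rewrite nth_cat size_filter -/(zeros u j.-1) hz ltnn subnn /=.
by rewrite (_ : 1 + j.-1 = j) ?uj0 //; lia.
Qed.

Lemma zeros_reach u l : 0 < l <= zeros u (size u) ->
  exists j, [/\ 0 < j <= size u, ltr u j = 0 & zeros u j.-1 = l.-1].
Proof.
elim: u l => [|x u IH] l /=; first by rewrite /zeros /=; lia.
have shift y j : 0 < j <= size u -> ltr (y :: u) j.+1 = ltr u j /\ j.+1.-1 = j.-1.+1.
  by move=> hj; rewrite ltr_cons; lia.
rewrite zeros_cons; case: (eqVneq x 0) => [->|hx] /= hl.
- case: (eqVneq l 1) => [->|l1]; first by exists 1.
  have [|j [hj uj0 hz]] := IH l.-1; first lia.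
  exists j.+1; have [-> ->] := shift 0 j hj.
  by split => //; [lia | rewrite zeros_cons hz /=; lia].
- have [|j [hj uj0 hz]] := IH l; first by move: hl.
  exists j.+1; have [-> ->] := shift x j hj.
  by split => //; [lia | rewrite zeros_cons hz (negbTE hx)].
Qed.

Lemma zposP (u : word) l : 0 < l <= count_mem 0 u ->
  [/\ 0 < zpos u l <= size u, ltr u (zpos u l) = 0 & zeros u (zpos u l).-1 = l.-1].
Proof.
rewrite -zeros_size => hl; have [j [hj uj0 hz]] := zeros_reach hl.
by rewrite (zposE _ hj uj0 hz) //; case/andP: hl.
Qed.

Lemma ShP n v w : w \in Sh n v -> [/\ size w = n, count_mem 0 w = n - size v & Pos w = v].
Proof. by rewrite inE => /and3P[/eqP-> /eqP-> /eqP->]. Qed.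

Lemma derangement_uniq v : derangement v -> uniq v.
Proof. by case/andP=> /perm_uniq-> _; exact: iota_uniq. Qed.

Lemma derangement_index v x : derangement v -> x \in v -> x != (index x v).+1.
Proof.
case/andP=> _ /allP hv xv.
by have := hv (index x v); rewrite mem_iota add0n index_mem xv nth_index //; apply.
Qed.

Lemma redS u t : t < size u -> red u t.+1 = red u t + (0 < ltr u t.+1).
Proof. by move=> ht; rewrite /red (take_nth 0) // -cats1 count_cat /= addn0. Qed.

Lemma mem_Pos (u : word) t : 0 < t <= size u -> 0 < ltr u t -> ltr u t \in Pos u.
Proof.
move=> ht pos; have ht' : t.-1 < size u by lia.
by rewrite mem_filter pos; apply: mem_nth.
Qed.

Lemma red_index (u : word) t : uniq (Pos u) -> 0 < t <= size u -> 0 < ltr u t ->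
  red u t = (index (ltr u t) (Pos u)).+1.
Proof.
case: t => // t uv /andP[_ ht] pos.
have hsplit : Pos u = rcons (Pos (take t u)) (ltr u t.+1) ++ Pos (drop t.+1 u).
  by rewrite /Pos -{1}(cat_take_drop t.+1 u) filter_cat (take_nth 0) // filter_rcons pos.
rewrite redS // pos addn1 /red -size_filter -/(Pos (take t u)); congr S.
move: uv; rewrite hsplit cat_rcons cat_uniq => /and3P[_ /hasPn nR _].
rewrite index_cat ifF; first by rewrite /= eqxx addn0.
by apply/negbTE/(nR (ltr u t.+1)); rewrite inE eqxx.
Qed.

Lemma xltE u t : 0 < t <= size u -> xlt u t = Some (ltr u t).
Proof. by rewrite /xlt => ->. Qed.

(* By [red_index], a positive letter x of a word of Sh(0^{n-m} v) is subexcedent iff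
   [sub_letter v x]. *)
Definition sub_letter (v : word) x := x <= index x v.

Definition osub (v : word) (a : option nat) :=
  if a is Some x then (0 < x) && sub_letter v x else false.

Lemma osubE v u t : 0 < t <= size u ->
  osub v (xlt u t) = (0 < ltr u t) && sub_letter v (ltr u t).
Proof. by move=> ht; rewrite xltE. Qed.

Lemma osubP v u t : osub v (xlt u t) ->
  [/\ 0 < t <= size u, 0 < ltr u t & sub_letter v (ltr u t)].
Proof. by rewrite /xlt; case: ifP => //= ht /andP[]. Qed.

Lemma nsub_letter_succ_index v a b : index b v = (index a v).+1 -> a < b ->
  ~~ sub_letter v a -> ~~ sub_letter v b.
Proof. rewrite /sub_letter; lia. Qed.

Lemma sub_letter_succ_index v a b : index b v = (index a v).+1 -> b < a ->
  sub_letter v a -> sub_letter v b.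
Proof. rewrite /sub_letter; lia. Qed.

Section Derangement.

Variable v : word.
Hypothesis derv : derangement v.

Lemma subexcE u t : Pos u = v -> subexc u t = osub v (xlt u t).
Proof.
move=> hP; rewrite /subexc /xlt; case: ifP => //= ht.
case: (posnP (ltr u t)) => [->//|pos] /=.
by rewrite red_index ?hP // derangement_uniq.
Qed.

Lemma excE u t : Pos u = v -> 0 < t <= size u ->
  exc u t = (0 < ltr u t) && ~~ sub_letter v (ltr u t).
Proof.
move=> hP ht; rewrite /exc ht; case: (posnP (ltr u t)) => [->//|pos] /=.
have := derangement_index derv (_ : ltr u t \in v); rewrite -hP mem_Pos // => /(_ isT).
by rewrite red_index ?hP ?derangement_uniq // /sub_letter; lia.
Qed.

Lemma nonsubE u t : Pos u = v -> nonsub u t = ~~ osub v (xlt u t).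
Proof.
move=> hP; rewrite /nonsub; case: ifP => ht; last by rewrite /xlt ht.
by rewrite excE // osubE //; case: (posnP (ltr u t)) => [->|].
Qed.

Lemma index_adjacent u t : Pos u = v -> 0 < t < size u ->
  0 < ltr u t -> 0 < ltr u t.+1 -> index (ltr u t.+1) v = (index (ltr u t) v).+1.
Proof.
move=> hP ht pos1 pos2; have uP : uniq (Pos u) by rewrite hP derangement_uniq.
have ht1 : 0 < t.+1 <= size u by lia.
rewrite -hP; have := red_index uP ht1 pos2.
rewrite redS ?red_index //; lia.
Qed.

Lemma index_across_zero u j : Pos u = v -> 1 < j < size u -> ltr u j = 0 ->
  0 < ltr u j.-1 -> 0 < ltr u j.+1 -> index (ltr u j.+1) v = (index (ltr u j.-1) v).+1.
Proof.
move=> hP hj uj0 pos1 pos2; have uP : uniq (Pos u) by rewrite hP derangement_uniq.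
have j0 : 0 < j by lia.
have hr : red u j = red u j.-1.
  by rewrite -{1}(prednK j0) redS ?prednK ?uj0 ?addn0 //; lia.
have hj1 : 0 < j.+1 <= size u by lia.
rewrite -hP; have := red_index uP hj1 pos2.
rewrite redS ?hr ?red_index //; lia.
Qed.

End Derangement.

Lemma segment_ind (P : pred nat) a b :
  (forall t, a <= t < b -> P t -> P t.+1) -> P a -> forall t, a <= t <= b -> P t.
Proof.
move=> step Pa; elim=> [|t IH] ht; first by rewrite (_ : 0 = a) //; lia.
by case: (eqVneq a t.+1) => [<-//|ne]; apply: step; [lia | apply: IH; lia].
Qed.

Definition chain_b_max (u : word) n j :=
  last j.+1 [seq k <- iota j.+1 (n - j) | chain_b u j k].
Definition chain_c_min (u : word) j :=
  head j.-1 [seq i <- iota 1 j.-1 | chain_c u j i].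

Section Chains.

Variable v : word.
Hypothesis derv : derangement v.

Variable u : word.
Hypothesis Pos_u : Pos u = v.

Let red_sub t : 0 < t <= size u -> 0 < ltr u t ->
  (ltr u t < red u t) = sub_letter v (ltr u t).
Proof. by move=> ht pos; rewrite red_index // Pos_u // derangement_uniq. Qed.

Lemma chain_b_maxP j : 0 < j -> ltr u j = 0 -> osub v (xlt u j.+1) ->
  let k := chain_b_max u (size u) j in
  [/\ j < k <= size u,
      forall t, j < t <= k -> 0 < ltr u t /\ sub_letter v (ltr u t),
      forall t, j < t < k -> ltr u t < ltr u t.+1
    & ~~ (osub v (xlt u k.+1) && (ltr u k < ltr u k.+1))].
Proof.
move=> j0 uj0 subr k; have [hj1 pos1 sub1] := osubP subr.
have [||hk chk kmax] := @last_filter_iota_max (chain_b u j) j.+1 (size u - j).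
- lia.
- by rewrite /chain_b subnn /= red_sub.
rewrite -/(chain_b_max u (size u) j) -/k in hk chk kmax.
case/andP: chk => /allP inc0 ltk.
have inc t : j < t < k -> ltr u t < ltr u t.+1.
  by move=> ht; apply: inc0; rewrite mem_iota; lia.
have pos t : j < t <= k -> 0 < ltr u t.
  move=> ht; case: (eqVneq t j.+1) => [->//|tj].
  by have := inc t.-1; rewrite prednK; lia.
have subk : sub_letter v (ltr u k) by rewrite -red_sub ?pos //; lia.
have sub t : j < t <= k -> sub_letter v (ltr u t).
  move=> ht; apply/negPn/negP => nsub.
  suff : ~~ sub_letter v (ltr u k) by rewrite subk.
  apply: (segment_ind (P := fun t => ~~ sub_letter v (ltr u t)) (b := k) _ nsub); last lia.
  move=> s hs; apply: nsub_letter_succ_index; last (apply: inc; lia).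
  by apply: (index_adjacent derv Pos_u); try apply: pos; lia.
split => //; first lia; first by move=> t ht; split; [apply: pos | apply: sub].
apply/negP => /andP[subk1 ltk1]; have [hk1 pk1 sk1] := osubP subk1.
have hk1' : k < k.+1 < j.+1 + (size u - j) by lia.
suff : chain_b u j k.+1 by rewrite (negbTE (kmax _ hk1')).
rewrite /chain_b red_sub // sk1 andbT; apply/allP => t; rewrite mem_iota => ht.
by case: (ltnP t k) => htk; [apply: inc | rewrite (_ : t = k)]; lia.
Qed.

Lemma chain_c_minP j : ltr u j = 0 -> osub v (xlt u j.-1) ->
  let i := chain_c_min u j in
  [/\ 0 < i <= j.-1,
      forall t, i <= t <= j.-1 -> 0 < ltr u t /\ sub_letter v (ltr u t),
      forall t, i <= t < j.-1 -> ltr u t.+1 < ltr u t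
    & osub v (xlt u i.-1) ==> (ltr u i.-1 < ltr u i)].
Proof.
move=> uj0 subl i; have [hj1 pos1 sub1] := osubP subl.
have [||hi chi imin] := @head_filter_iota_min (chain_c u j) 1 j.-1 j.-1.
- lia.
- by rewrite add1n /= /chain_c subnn /= andbT red_sub.
rewrite -/(chain_c_min u j) -/i in hi chi imin.
case/andP: chi => lti /allP dec0.
have dec t : i <= t < j.-1 -> ltr u t.+1 < ltr u t.
  by move=> ht; apply: dec0; rewrite mem_iota; lia.
have pos t : i <= t <= j.-1 -> 0 < ltr u t.
  move=> ht; case: (eqVneq t j.-1) => [->//|tj].
  by have := dec t; lia.
have sub : forall t, i <= t <= j.-1 -> sub_letter v (ltr u t).
  apply: segment_ind; last by rewrite -red_sub ?pos //; lia.
  move=> t ht; apply: sub_letter_succ_index; last exact: dec.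
  by apply: (index_adjacent derv Pos_u); try apply: pos; lia.
split => //; first by move=> t ht; split; [apply: pos | apply: sub].
apply/implyP => subi1; have [hi1 pi1 si1] := osubP subi1.
have pi : 0 < ltr u i by apply: pos; lia.
have hi0 : 0 < i.-1 < size u by lia.
have idx := index_adjacent derv Pos_u hi0 pi1; rewrite prednK in idx; last lia.
move/(_ pi) in idx.
case: (ltngtP (ltr u i.-1) (ltr u i)) => // [gti|eqi]; last by rewrite eqi in idx; lia.
have hi1' : 1 <= i.-1 < i by lia.
suff : chain_c u j i.-1 by rewrite (negbTE (imin _ hi1')).
rewrite /chain_c; have -> : ltr u i.-1 < red u i.-1 by rewrite red_sub //; lia.
apply/allP => t; rewrite mem_iota => ht.
by case: (eqVneq t i.-1) => [->|ti]; [rewrite prednK; lia | apply: dec; lia].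
Qed.

End Chains.

Definition move_zero_right (u : word) j k :=
  take j.-1 u ++ drop j (take k u) ++ 0 :: drop k u.
Definition move_zero_left (u : word) j i :=
  take i.-1 u ++ 0 :: drop i.-1 (take j.-1 u) ++ drop j u.

Lemma split_at_zero (u : word) j : 0 < j <= size u -> ltr u j = 0 ->
  u = take j.-1 u ++ 0 :: drop j u.
Proof.
move=> hj uj0; have hj1 : j.-1 < size u by lia.
by rewrite -{1}(cat_take_drop j.-1 u) (drop_nth 0 hj1) -[nth 0 u j.-1]/(ltr u j) uj0 prednK //; lia.
Qed.

Lemma move_zero_rightE (u : word) j k : 0 < j <= k -> k <= size u -> ltr u j = 0 ->
  u = take j.-1 u ++ 0 :: drop j (take k u) ++ drop k u.
Proof.
move=> hj hk uj0; have jk : j <= k by lia.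
have -> : drop j (take k u) ++ drop k u = drop j u.
  by rewrite -[in RHS](cat_take_drop (k - j) (drop j u)) take_drop drop_drop subnK.
by apply: split_at_zero; lia.
Qed.

Lemma move_zero_leftE (u : word) j i : 0 < i <= j.-1 -> j <= size u -> ltr u j = 0 ->
  u = take i.-1 u ++ drop i.-1 (take j.-1 u) ++ 0 :: drop j u.
Proof.
move=> hi hj uj0; have ij : i.-1 <= j.-1 by lia.
rewrite catA -(take_takel u ij) cat_take_drop.
by apply: split_at_zero; lia.
Qed.

Lemma Sh_swap_zero n v (a b c : word) :
  (a ++ 0 :: b ++ c \in Sh n v) = (a ++ b ++ 0 :: c \in Sh n v).
Proof.
rewrite !inE /Pos !size_cat !count_cat !filter_cat /= !size_cat /= !count_cat /=.
by rewrite filter_cat !add1n !addnS.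
Qed.

Lemma move_zero_right_Sh n v (u : word) j k : 0 < j <= k -> k <= size u -> ltr u j = 0 ->
  (move_zero_right u j k \in Sh n v) = (u \in Sh n v).
Proof. by move=> hj hk uj0; rewrite [in RHS](move_zero_rightE hj hk uj0) Sh_swap_zero. Qed.

Lemma move_zero_left_Sh n v (u : word) j i : 0 < i <= j.-1 -> j <= size u -> ltr u j = 0 ->
  (move_zero_left u j i \in Sh n v) = (u \in Sh n v).
Proof. by move=> hi hj uj0; rewrite [in RHS](move_zero_leftE hi hj uj0) Sh_swap_zero. Qed.

Lemma move_zero_right_inj (u1 u2 : word) j k : 0 < j <= k -> k <= size u1 -> k <= size u2 ->
  ltr u1 j = 0 -> ltr u2 j = 0 -> move_zero_right u1 j k = move_zero_right u2 j k -> u1 = u2.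
Proof.
move=> hj hk1 hk2 z1 z2 /eqP.
have sa : size (take j.-1 u1) = size (take j.-1 u2) by rewrite !size_takel; lia.
have sb : size (drop j (take k u1)) = size (drop j (take k u2)).
  by rewrite !size_drop !size_takel.
rewrite eqseq_cat // eqseq_cat // => /and3P[/eqP e1 /eqP e2 /eqP[e3]].
by rewrite (move_zero_rightE hj hk1 z1) (move_zero_rightE hj hk2 z2) e1 e2 e3.
Qed.

Lemma move_zero_left_inj (u1 u2 : word) j i : 0 < i <= j.-1 -> j <= size u1 -> j <= size u2 ->
  ltr u1 j = 0 -> ltr u2 j = 0 -> move_zero_left u1 j i = move_zero_left u2 j i -> u1 = u2.
Proof.
move=> hi hj1 hj2 z1 z2 /eqP.
have sa : size (take i.-1 u1) = size (take i.-1 u2) by rewrite !size_takel; lia.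
have sb : size (drop i.-1 (take j.-1 u1)) = size (drop i.-1 (take j.-1 u2)).
  by rewrite !size_drop !size_takel //; lia.
rewrite eqseq_cat // eqseq_cons eqxx andTb eqseq_cat // => /and3P[/eqP e1 /eqP e2 /eqP e3].
by rewrite (move_zero_leftE hi hj1 z1) (move_zero_leftE hi hj2 z2) e1 e2 e3.
Qed.

Lemma size_move_zero_right (u : word) j k : 0 < j <= k -> k <= size u ->
  size (move_zero_right u j k) = size u.
Proof. by move=> hj hk; rewrite /move_zero_right !size_cat /= !size_drop !size_takel; lia. Qed.

Lemma size_move_zero_left (u : word) j i : 0 < i <= j.-1 -> j <= size u ->
  size (move_zero_left u j i) = size u.
Proof.
by move=> hi hj; rewrite /move_zero_left !size_cat /= size_cat !size_drop !size_takel; lia.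
Qed.

Lemma ltr_move_zero_right (u : word) j k t : 0 < j <= k -> k <= size u -> 0 < t ->
  ltr (move_zero_right u j k) t =
  if t < j then ltr u t else if t < k then ltr u t.+1 else if t == k then 0 else ltr u t.
Proof.
move=> hj hk ht; rewrite /move_zero_right /ltr nth_cat size_takel; last lia.
case: ifP => h1; first by rewrite nth_take // ifT //; lia.
rewrite ifF; last lia.
rewrite nth_cat size_drop size_takel //.
case: ifP => h2.
  rewrite nth_drop nth_take; last lia.
  by rewrite ifT; [congr nth | ]; lia.
rewrite ifF; last lia.
case: (eqVneq t k) => [->|tk].
  by rewrite (_ : k.-1 - j.-1 - (k - j) = 0) //; lia.
rewrite (_ : t.-1 - j.-1 - (k - j) = (t.-1 - k).+1); last lia.
by rewrite /= nth_drop; congr nth; lia.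
Qed.

Lemma ltr_move_zero_left (u : word) j i t : 0 < i <= j.-1 -> j <= size u -> 0 < t ->
  ltr (move_zero_left u j i) t =
  if t < i then ltr u t else if t == i then 0 else if t <= j then ltr u t.-1 else ltr u t.
Proof.
move=> hi hj ht; rewrite /move_zero_left /ltr nth_cat size_takel; last lia.
case: ifP => h1; first by rewrite nth_take // ifT //; lia.
rewrite ifF; last lia.
case: (eqVneq t i) => [->|ti]; first by rewrite subnn.
rewrite (_ : t.-1 - i.-1 = (t.-1 - i).+1) /=; last lia.
rewrite nth_cat size_drop size_takel; last lia.
case: ifP => h2.
  rewrite nth_drop nth_take; last lia.
  by rewrite ifT; [congr nth | ]; lia.
by rewrite ifF ?nth_drop; [congr nth |]; lia.
Qed.

(* What case (b) of phi_l (resp. case (c) below) guarantees when it moves the zero at j to k. *)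
Definition right_move v (u : word) j k :=
  [/\ j < k <= size u,
      forall t, j < t <= k -> 0 < ltr u t /\ sub_letter v (ltr u t),
      forall t, j < t < k -> ltr u t < ltr u t.+1,
      ~~ (osub v (xlt u k.+1) && (ltr u k < ltr u k.+1))
    & ~~ osub v (xlt u j.-1) || (ltr u j.+1 < ltr u j.-1)].

Definition left_move v (u : word) j i :=
  [/\ 0 < i <= j.-1,
      forall t, i <= t <= j.-1 -> 0 < ltr u t /\ sub_letter v (ltr u t),
      forall t, i <= t < j.-1 -> ltr u t.+1 < ltr u t,
      osub v (xlt u i.-1) ==> (ltr u i.-1 < ltr u i)
    & ~~ osub v (xlt u j.+1) || (ltr u j.-1 < ltr u j.+1)].

Lemma phi_out n m l (u : word) : ~~ (0 < l <= n - m) -> phi n m l u = u.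
Proof. by move=> hl; rewrite /phi ifT //; lia. Qed.

Section PhiCases.

Variable v : word.
Hypothesis derv : derangement v.

Lemma phi_cases n (u : word) l : u \in Sh n v -> 0 < l <= n - size v ->
  let j := zpos u l in let u' := phi n (size v) l u in
  [\/ [/\ u' = u, ~~ osub v (xlt u j.-1) & ~~ osub v (xlt u j.+1)],
      exists2 k, u' = move_zero_right u j k & right_move v u j k
    | exists2 i, u' = move_zero_left u j i & left_move v u j i].
Proof.
move=> hu hl j u'; have [su cnt hP] := ShP hu.
have hl' : 0 < l <= count_mem 0 u by rewrite cnt.
have [hj uj0 _] := zposP hl'; rewrite -/j in hj uj0.
have right_case : osub v (xlt u j.+1) -> ~~ osub v (xlt u j.-1) || (ltr u j.+1 < ltr u j.-1) ->
    right_move v u j (chain_b_max u n j).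
  move=> sr cnd; rewrite -su; have j0 : 0 < j by lia.
  by have [] := chain_b_maxP derv hP j0 uj0 sr; split.
have left_case : osub v (xlt u j.-1) -> ~~ osub v (xlt u j.+1) || (ltr u j.-1 < ltr u j.+1) ->
    left_move v u j (chain_c_min u j).
  by move=> sl cnd; have [] := chain_c_minP derv hP uj0 sl; split.
rewrite /u' /phi ifF; last lia.
rewrite -/j !(nonsubE derv) // !(subexcE derv) //.
case sl: (osub v (xlt u j.-1)); case sr: (osub v (xlt u j.+1)) => /=.
- case: (ltngtP (ltr u j.+1) (ltr u j.-1)) => [lt|gt|eq].
  + by apply: Or32; exists (chain_b_max u n j) => //; apply: right_case; rewrite ?lt ?orbT.
  + by apply: Or33; exists (chain_c_min u j) => //; apply: left_case; rewrite ?gt ?orbT.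
  + have [hjl pl _] := osubP sl; have [hjr pr _] := osubP sr.
    have hj' : 1 < j < size u by lia.
    by have := index_across_zero derv hP hj' uj0 pl pr; rewrite eq; lia.
- by apply: Or33; exists (chain_c_min u j) => //; apply: left_case; rewrite ?sr.
- by apply: Or32; exists (chain_b_max u n j) => //; apply: right_case; rewrite ?sl.
- by apply: Or31.
Qed.

Lemma phi_Sh n (u : word) l : u \in Sh n v -> phi n (size v) l u \in Sh n v.
Proof.
move=> hu; case: (boolP (0 < l <= n - size v)) => hl; last by rewrite phi_out.
have [su cnt _] := ShP hu.
have hl' : 0 < l <= count_mem 0 u by rewrite cnt.
have [hj uj0 _] := zposP hl'.
case: (phi_cases hu hl) => [[-> _ _] | [k -> [hk _ _ _ _]] | [i -> [hi _ _ _ _]]] //.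
- by rewrite move_zero_right_Sh //; lia.
- by rewrite move_zero_left_Sh //; lia.
Qed.

End PhiCases.

Lemma zpos_move_zero_right (u : word) j k l : 0 < l -> 0 < j < k -> k <= size u ->
  zeros u j.-1 = l.-1 -> (forall t, j < t <= k -> 0 < ltr u t) ->
  zpos (move_zero_right u j k) l = k.
Proof.
move=> l0 hj hk hz pos; have hjk : 0 < j <= k by lia.
apply: zposE => //; rewrite ?size_move_zero_right ?ltr_move_zero_right //; try lia.
  by decide_ifs.
have -> : k.-1 = j.-1 + (k - j) by lia.
rewrite (proj2 (zeros_eq_pos _ (leq_addr _ _))); last first.
  by move=> t ht; rewrite ltr_move_zero_right //; try lia; decide_ifs; apply: pos; lia.
by rewrite -hz; apply: zeros_ext => t ht; rewrite ltr_move_zero_right //; try lia; decide_ifs.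
Qed.

Lemma zpos_move_zero_left (u : word) j i l : 0 < l -> 0 < i <= j.-1 -> j <= size u ->
  zeros u j.-1 = l.-1 -> (forall t, i <= t <= j.-1 -> 0 < ltr u t) ->
  zpos (move_zero_left u j i) l = i.
Proof.
move=> l0 hi hj hz pos.
apply: zposE => //; rewrite ?size_move_zero_left ?ltr_move_zero_left //; try lia.
  by decide_ifs.
have e : j.-1 = i.-1 + (j.-1 - i.-1) by lia.
rewrite -hz e (proj2 (zeros_eq_pos _ (leq_addr _ _))); last by move=> t ht; apply: pos; lia.
by apply: zeros_ext => t ht; rewrite ltr_move_zero_left //; try lia; decide_ifs.
Qed.

(* The pattern around the zero at p left by a right (resp. left) move: it identifies the case of
   phi_l that produced the word. *)
Definition right_shape v (u : word) p :=
  osub v (xlt u p.-1) && ~~ (osub v (xlt u p.+1) && (ltr u p.-1 < ltr u p.+1)).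
Definition left_shape v (u : word) p :=
  osub v (xlt u p.+1) && (osub v (xlt u p.-1) ==> (ltr u p.-1 < ltr u p.+1)).

Lemma right_shape_not_left v (u : word) p : right_shape v u p -> ~~ left_shape v u p.
Proof.
rewrite /right_shape /left_shape.
by case: (osub v (xlt u p.-1)); case: (osub v (xlt u p.+1)); case: (_ < _).
Qed.

Lemma right_move_shape v (u : word) j k : 0 < j -> right_move v u j k ->
  right_shape v (move_zero_right u j k) k.
Proof.
move=> j0 [hk pos _ kmax _]; have hjk : 0 < j <= k by lia.
have hkk : j < k <= k by lia.
have [posk subk] := pos k hkk.
rewrite /right_shape /xlt size_move_zero_right ?ltr_move_zero_right //; try lia.
decide_ifs; rewrite prednK; last lia.
by move: kmax; rewrite /xlt /= posk subk.
Qed.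

Lemma left_move_shape v (u : word) j i : j <= size u -> left_move v u j i ->
  left_shape v (move_zero_left u j i) i.
Proof.
move=> hj [hi pos _ imin _].
have hii : i <= i <= j.-1 by lia.
have [posi subi] := pos i hii.
have hs := size_move_zero_left hi hj.
rewrite /left_shape; have -> : osub v (xlt (move_zero_left u j i) i.+1).
  by rewrite osubE ?hs ?ltr_move_zero_left //; try lia; decide_ifs; rewrite posi subi.
case: (posnP i.-1) => [-> //|i1].
rewrite osubE ?hs ?ltr_move_zero_left //; try lia.
by decide_ifs; rewrite -osubE //; lia.
Qed.

Lemma move_zero_right_start_le v (u1 u2 : word) j1 j2 k : 0 < j1 ->
  right_move v u1 j1 k -> right_move v u2 j2 k ->
  move_zero_right u1 j1 k = move_zero_right u2 j2 k -> j2 <= j1.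
Proof.
move=> j10 [hk1 pos1 inc1 _ _] [hk2 _ _ _ cnd2] e; rewrite leqNgt; apply/negP => lt12.
have a : ltr u1 j2 = ltr u2 j2.-1.
  move: (congr1 (ltr^~ j2.-1) e) => /=; rewrite !ltr_move_zero_right; try lia.
  by decide_ifs; rewrite prednK //; lia.
have b : ltr u1 j2.+1 = ltr u2 j2.+1.
  by move: (congr1 (ltr^~ j2) e) => /=; rewrite !ltr_move_zero_right; try lia; decide_ifs.
have hj2 : j1 < j2 <= k by lia.
have [p s] := pos1 j2 hj2; have := inc1 j2 _; move: cnd2.
by rewrite osubE -?a -?b ?p ?s /=; lia.
Qed.

Lemma move_zero_left_start_le v (u1 u2 : word) j1 j2 i : j1 <= size u1 -> j2 <= size u2 ->
  left_move v u1 j1 i -> left_move v u2 j2 i ->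
  move_zero_left u1 j1 i = move_zero_left u2 j2 i -> j2 <= j1.
Proof.
move=> hs1 hs2 [hi1 _ _ _ cnd1] [hi2 pos2 dec2 _ _] e; rewrite leqNgt; apply/negP => lt12.
have a : ltr u1 j1.+1 = ltr u2 j1.
  by move: (congr1 (ltr^~ j1.+1) e) => /=; rewrite !ltr_move_zero_left; try lia; decide_ifs.
have b : ltr u1 j1.-1 = ltr u2 j1.-1.
  by move: (congr1 (ltr^~ j1) e) => /=; rewrite !ltr_move_zero_left; try lia; decide_ifs.
have hj1 : i <= j1 <= j2.-1 by lia.
have [p s] := pos2 j1 hj1; have := dec2 j1.-1 _; move: cnd1.
have su : size u1 = size u2.
  by rewrite -(size_move_zero_left hi1 hs1) e size_move_zero_left.
by rewrite osubE ?a ?b ?p ?s /= ?prednK; lia.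
Qed.

Section PhiInjective.

Variable v : word.
Hypothesis derv : derangement v.

Lemma phi_image n (u : word) l : u \in Sh n v -> 0 < l <= n - size v ->
  let u' := phi n (size v) l u in let j := zpos u l in let p := zpos u' l in
  [\/ [/\ u' = u, ~~ osub v (xlt u' p.-1) & ~~ osub v (xlt u' p.+1)],
      [/\ u' = move_zero_right u j p, right_move v u j p & right_shape v u' p]
    | [/\ u' = move_zero_left u j p, left_move v u j p & left_shape v u' p]].
Proof.
move=> hu hl u' j p; have [su cnt _] := ShP hu.
have hl' : 0 < l <= count_mem 0 u by rewrite cnt.
have [hj uj0 hz] := zposP hl'; have l0 : 0 < l by lia.
case: (phi_cases derv hu hl) => [[e nl nr]|[k e R]|[i e L]]; rewrite -/u' in e.
- by apply: Or31; rewrite /p e.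
- have [hk pos _ _ _] := R.
  have pk : p = k.
    rewrite /p e zpos_move_zero_right //; try lia.
    by move=> t /pos[].
  by apply: Or32; rewrite pk e; split => //; apply: right_move_shape R; lia.
- have [hi pos _ _ _] := L.
  have pi : p = i.
    rewrite /p e zpos_move_zero_left //; try lia.
    by move=> t /pos[].
  by apply: Or33; rewrite pi e; split => //; apply: left_move_shape L; lia.
Qed.

Lemma phi_inj n l (u1 u2 : word) : u1 \in Sh n v -> u2 \in Sh n v ->
  phi n (size v) l u1 = phi n (size v) l u2 -> u1 = u2.
Proof.
move=> h1 h2 e.
case: (boolP (0 < l <= n - size v)) => hl; last by rewrite !phi_out in e.
have [s1 c1 _] := ShP h1; have [s2 c2 _] := ShP h2.
have hl1 : 0 < l <= count_mem 0 u1 by rewrite c1.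
have hl2 : 0 < l <= count_mem 0 u2 by rewrite c2.
have [[hj1 z1 _] [hj2 z2 _]] := (zposP hl1, zposP hl2).
have := phi_image h2 hl; have := phi_image h1 hl; rewrite -e.
set u' := phi n (size v) l u1; set p := zpos u' l.
set j1 := zpos u1 l in hj1 z1 *; set j2 := zpos u2 l in hj2 z2 *.
case=> [[e1 nl1 nr1] | [e1 R1 rs1] | [e1 L1 ls1]];
case=> [[e2 nl2 nr2] | [e2 R2 rs2] | [e2 L2 ls2]].
- by rewrite -e1 -e2.
- by move: rs2; rewrite /right_shape (negbTE nl1).
- by move: ls2; rewrite /left_shape (negbTE nr1).
- by move: rs1; rewrite /right_shape (negbTE nl2).
- have [j10 j20] : 0 < j1 /\ 0 < j2 by lia.
  have le21 := move_zero_right_start_le j10 R1 R2 (etrans (esym e1) e2).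
  have le12 := move_zero_right_start_le j20 R2 R1 (etrans (esym e2) e1).
  have ej : j1 = j2 by lia.
  have [hk1 _ _ _ _] := R1; have [hk2 _ _ _ _] := R2.
  rewrite -ej in z2 e2; apply: (@move_zero_right_inj u1 u2 j1 p _ _ _ z1 z2); try lia.
  by rewrite -e1 -e2.
- by have := right_shape_not_left rs1; rewrite ls2.
- by move: ls1; rewrite /left_shape (negbTE nr2).
- by have := right_shape_not_left rs2; rewrite ls1.
- have [hs1 hs2] : j1 <= size u1 /\ j2 <= size u2 by lia.
  have le21 := move_zero_left_start_le hs1 hs2 L1 L2 (etrans (esym e1) e2).
  have le12 := move_zero_left_start_le hs2 hs1 L2 L1 (etrans (esym e2) e1).
  have ej : j1 = j2 by lia.
  have [hi1 _ _ _ _] := L1.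
  rewrite -ej in z2 e2; apply: (@move_zero_left_inj u1 u2 j1 p _ _ _ z1 z2); try lia.
  by rewrite -e1 -e2.
Qed.

End PhiInjective.

Definition riseb v (a b : nat) :=
  [|| (0 < a) && (a < b), (a == 0) && (b == 0), (a == 0) && (0 < b) && ~~ sub_letter v b
    | (0 < a) && sub_letter v a && (b == 0)].

Lemma riseb_pos v a b : 0 < a -> 0 < b -> riseb v a b = (a < b).
Proof. by case: a => // a; case: b => // b; rewrite /riseb /= !andbF !orbF. Qed.

Lemma riseb0p v b : 0 < b -> riseb v 0 b = ~~ sub_letter v b.
Proof. by case: b => // b; rewrite /riseb /= orbF. Qed.

Lemma risebp0 v a : 0 < a -> riseb v a 0 = sub_letter v a.
Proof. by case: a => // a; rewrite /riseb /= andbT. Qed.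

Lemma RISEE u : RISE u = [seq i <- iota 1 (size u) | (i == size u) || (ltr u i <= ltr u i.+1)].
Proof.
apply: eq_in_filter => i; rewrite mem_iota /xlt => hi.
case: (eqVneq i (size u)) => [->|ne] /=; first by rewrite ltnn; case: ifP.
have hi1 : 0 < i <= size u by lia.
have hi2 : i < size u by lia.
by rewrite hi1 hi2.
Qed.

Lemma RISEbE v u : derangement v -> Pos u = v ->
  RISEb u = [seq i <- iota 1 (size u) | (i == size u) || riseb v (ltr u i) (ltr u i.+1)].
Proof.
move=> derv hP; apply: eq_in_filter => i; rewrite mem_iota => hi.
rewrite (subexcE derv) // osubE; last lia.
case: (eqVneq i (size u)) => [->|ne] /=.
  rewrite /xlt ltnn andbF ifT /exc ?ltnn ?andbF //; last lia.
  by case: (ltr u (size u)).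
rewrite !xltE ?(excE derv) //=; try lia.
by case: (ltr u i) => [|a]; case: (ltr u i.+1) => [|b].
Qed.

Definition mixed_rise v (u : word) t i :=
  if i < t then ltr u i <= ltr u i.+1 else riseb v (ltr u i) (ltr u i.+1).

Definition mixed_rises v (u : word) t :=
  [seq i <- iota 1 (size u) | (i == size u) || mixed_rise v u t i].

Lemma rise_riseb_pos v (u : word) i : derangement v -> Pos u = v -> 0 < i < size u ->
  0 < ltr u i -> 0 < ltr u i.+1 -> (ltr u i <= ltr u i.+1) = riseb v (ltr u i) (ltr u i.+1).
Proof.
move=> derv hP hi p1 p2; rewrite riseb_pos //.
by have := index_adjacent derv hP hi p1 p2; rewrite leq_eqVlt; case: eqP => // ->; lia.
Qed.

Section MixedRiseStep.

Variable v : word.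
Hypothesis derv : derangement v.

Variables (u : word) (j z : nat).
Hypotheses (Pos_u : Pos u = v) (j_gt0 : 0 < j) (j_lt_z : j < z <= (size u).+1)
  (uj0 : ltr u j = 0) (pos_jz : forall t, j < t < z -> 0 < ltr u t)
  (uz0 : z <= size u -> ltr u z = 0).

Lemma mixed_rise_tail (u' : word) t' i : t' <= i -> j < i < size u ->
  ltr u' i = ltr u i -> ltr u' i.+1 = ltr u i.+1 -> mixed_rise v u z.-1 i = mixed_rise v u' t' i.
Proof.
move=> ti hi e1 e2; rewrite /mixed_rise e1 e2 [in RHS]ifF; last lia.
by case: ifP => // iz; apply: rise_riseb_pos => //; try lia; apply: pos_jz; lia.
Qed.

Lemma mixed_rise_fixed : ~~ osub v (xlt u j.-1) -> ~~ osub v (xlt u j.+1) ->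
  forall i, 0 < i < size u -> mixed_rise v u z.-1 i = mixed_rise v u j.-1 i.
Proof.
move=> nl nr i hi.
case: (ltnP i j.-1) => h1; first by rewrite /mixed_rise !ifT //; lia.
case: (leqP z.-1 i) => h2; first by rewrite /mixed_rise !ifF //; lia.
rewrite /mixed_rise ifT ?ifF; try lia.
case: (eqVneq i j.-1) => [ei|ne].
  rewrite ei prednK // uj0; case: (posnP (ltr u j.-1)) => [->//|p].
  have hj1 : 0 < j.-1 <= size u by lia.
  by move: nl; rewrite osubE // p risebp0 //= => /negbTE ->; lia.
case: (eqVneq i j) => [->|ne2].
  have p : 0 < ltr u j.+1 by apply: pos_jz; lia.
  have hj1 : 0 < j.+1 <= size u by lia.
  by move: nr; rewrite osubE // uj0 riseb0p // p => /= ->.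
by apply: rise_riseb_pos => //; try lia; apply: pos_jz; lia.
Qed.


Section RightMove.

Variable k : nat.
Hypothesis R : right_move v u j k.

Let u' := move_zero_right u j k.

Let k_lt_z : k < z.
Proof.
case: R => hk pos _ _ _; case: (ltnP k z) => // zk.
have hz : j < z <= k by lia.
by have [] := pos z hz; rewrite uz0; lia.
Qed.

Let ltr_u' t : 0 < t -> ltr u' t =
  if t < j then ltr u t else if t < k then ltr u t.+1 else if t == k then 0 else ltr u t.
Proof. by case: R => hk _ _ _ _ ht; rewrite ltr_move_zero_right //; lia. Qed.

Lemma mixed_rise_right_low i : 0 < i < k -> mixed_rise v u z.-1 i = mixed_rise v u' k.-1 i.
Proof.
case: R => hk pos inc _ cnd hi; have kz := k_lt_z.
have rise_seg t : j <= t < k -> ltr u t <= ltr u t.+1.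
  by move=> ht; case: (eqVneq t j) => [->|tj]; [rewrite uj0 | apply: ltnW; apply: inc]; lia.
rewrite /mixed_rise !ltr_u'; try lia.
case: (ltnP i j.-1) => h1; first by decide_ifs.
case: (eqVneq i j.-1) => [ei|ne].
  decide_ifs; rewrite ei prednK // uj0; case: (posnP (ltr u j.-1)) => [->//|pl].
  have hj1 : j < j.+1 <= k by lia.
  have [pr sr] := pos j.+1 hj1.
  have hj : 1 < j < size u by lia.
  have idx := index_across_zero derv Pos_u hj uj0 pl pr.
  move: cnd; rewrite osubE ?pl /=; try lia.
  case/orP => [nsl|]; last lia.
  case: (ltngtP (ltr u j.-1) (ltr u j.+1)) => [lt|gt|eq]; [|lia|by rewrite eq in idx; lia].
  by move: (nsub_letter_succ_index idx lt nsl); rewrite sr.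
decide_ifs; case: (ltnP i k.-1) => h3.
  by decide_ifs; rewrite !rise_seg //; lia.
have ei : i = k.-1 by lia.
decide_ifs; rewrite ei prednK ?rise_seg; try lia.
have hkk : j < k <= k by lia.
by have [pk sk] := pos k hkk; rewrite risebp0.
Qed.

Lemma mixed_rise_right_high i : k <= i < size u -> mixed_rise v u z.-1 i = mixed_rise v u' k.-1 i.
Proof.
have [hk pos _ kmax _] := R; have kz := k_lt_z; move=> hi.
case: (eqVneq i k) => [->|ne]; last first.
  by apply: mixed_rise_tail; rewrite ?ltr_u'; try lia; decide_ifs.
have hkk : j < k <= k by lia.
have [pk sk] := pos k hkk.
rewrite /mixed_rise !ltr_u'; try lia.
decide_ifs; case: (ltnP k z.-1) => hkz.
  have pk1 : 0 < ltr u k.+1 by apply: pos_jz; lia.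
  have hk' : 0 < k < size u by lia.
  have idx := index_adjacent derv Pos_u hk' pk pk1.
  move: kmax; rewrite riseb0p // osubE ?pk1 /=; try lia.
  case: (ltngtP (ltr u k) (ltr u k.+1)) => [lt|gt|eq]; rewrite ?andbT ?andbF //=.
    by move: (sub_letter_succ_index idx gt sk) => ->; lia.
  by move: idx; rewrite eq; lia.
have uk1 : ltr u k.+1 = 0 by rewrite (_ : k.+1 = z) ?uz0; lia.
by rewrite uk1 risebp0.
Qed.

End RightMove.

Section LeftMove.

Variable s : nat.
Hypothesis L : left_move v u j s.

Let u' := move_zero_left u j s.

Let ltr_u' t : 0 < t -> ltr u' t =
  if t < s then ltr u t else if t == s then 0 else if t <= j then ltr u t.-1 else ltr u t.
Proof.
case: L => hs _ _ _ _ ht; have hj : j <= size u by lia.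
by rewrite ltr_move_zero_left.
Qed.

Lemma mixed_rise_left_low i : 0 < i < j -> mixed_rise v u z.-1 i = mixed_rise v u' s.-1 i.
Proof.
case: L => hs pos dec smin _ hi.
have [ps ss] : 0 < ltr u s /\ sub_letter v (ltr u s) by apply: pos; lia.
have no_rise t : s <= t < j -> ltr u t.+1 < ltr u t.
  move=> ht; case: (eqVneq t.+1 j) => [->|tj]; last by apply: dec; lia.
  by rewrite uj0; apply: (proj1 (pos t _)); lia.
rewrite /mixed_rise !ltr_u'; try lia.
case: (ltnP i s.-1) => h1; first by decide_ifs.
case: (eqVneq i s.-1) => [ei|ne].
  decide_ifs; rewrite ei prednK; last lia.
  case: (posnP (ltr u s.-1)) => [->//|pl]; rewrite risebp0 //.
  have hs1 : 0 < s.-1 < size u by lia.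
  have := index_adjacent derv Pos_u hs1 pl; rewrite prednK; last lia.
  move=> /(_ ps) idx.
  apply/idP/idP => [le|sl]; last by move: smin; rewrite osubE ?pl ?sl /=; lia.
  apply/negPn/negP => nsl.
  have lt : ltr u s.-1 < ltr u s.
    by rewrite ltn_neqAle le andbT; apply/eqP => eq; move: idx; rewrite eq; lia.
  by move: (nsub_letter_succ_index idx lt nsl); rewrite ss.
decide_ifs; case: (eqVneq i s) => [->|ne2].
  by decide_ifs; rewrite riseb0p // ss; apply/negbTE; rewrite -ltnNge no_rise //; lia.
have ha : s <= i.-1 <= j.-1 by lia.
have hb : s <= i <= j.-1 by lia.
decide_ifs; have [[pa _] [pb _]] := (pos _ ha, pos _ hb).
have := dec i.-1; rewrite prednK; last lia.
by have := no_rise i; rewrite riseb_pos //=; lia.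
Qed.

Lemma mixed_rise_left_high i : j <= i < size u -> mixed_rise v u z.-1 i = mixed_rise v u' s.-1 i.
Proof.
case: L => hs pos _ _ cnd hi.
case: (eqVneq i j) => [->|ne]; last first.
  by apply: mixed_rise_tail; rewrite ?ltr_u'; try lia; decide_ifs.
have [pl sl] : 0 < ltr u j.-1 /\ sub_letter v (ltr u j.-1) by apply: pos; lia.
rewrite /mixed_rise !ltr_u'; try lia.
decide_ifs; rewrite uj0; case: (ltnP j z.-1) => hjz.
  have pr : 0 < ltr u j.+1 by apply: pos_jz; lia.
  have hj : 1 < j < size u by lia.
  have idx := index_across_zero derv Pos_u hj uj0 pl pr.
  move: cnd; rewrite riseb_pos // osubE ?pr /=; try lia.
  case: (ltngtP (ltr u j.-1) (ltr u j.+1)) => [lt|gt|eq]; rewrite ?orbT //=.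
    by rewrite (sub_letter_succ_index idx gt sl).
  by move: idx; rewrite eq; lia.
have uj1 : ltr u j.+1 = 0 by rewrite (_ : j.+1 = z) ?uz0; lia.
by rewrite uj1 (risebp0 _ pl) sl.
Qed.

End LeftMove.

End MixedRiseStep.

Section Invariant.

Variable v : word.
Hypothesis derv : derangement v.

Lemma mixed_rises_phi n (u : word) l z : u \in Sh n v -> 0 < l <= n - size v ->
  zpos u l < z <= n.+1 -> (forall t, zpos u l < t < z -> 0 < ltr u t) ->
  (z <= n -> ltr u z = 0) ->
  mixed_rises v u z.-1 = mixed_rises v (phi n (size v) l u) (zpos (phi n (size v) l u) l).-1.
Proof.
move=> hu hl hz pos uz0; have [su cnt hP] := ShP hu.
have [su' _ _] := ShP (phi_Sh derv l hu).
have hl' : 0 < l <= count_mem 0 u by rewrite cnt.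
have [hj uj0 _] := zposP hl'; rewrite -su in hz uz0.
have j0 : 0 < zpos u l by lia.
rewrite /mixed_rises su' su; apply: eq_in_filter => i; rewrite mem_iota => hi.
case: (eqVneq i n) => [//|ne] /=; have hi' : 0 < i < size u by lia.
set p := zpos (phi n (size v) l u) l.
case: (phi_image derv hu hl) => [[e nl nr]|[e R _]|[e L _]]; rewrite e.
- move: nl nr; rewrite /p e => nl nr.
  exact: (mixed_rise_fixed derv hP j0 hz uj0 pos uz0 nl nr hi').
- case: (ltnP i p) => hik.
    by apply: (mixed_rise_right_low derv hP j0 hz uj0) => //; lia.
  by apply: (mixed_rise_right_high derv hP j0 hz uj0) => //; lia.
- case: (ltnP i (zpos u l)) => hij.
    by apply: (mixed_rise_left_low derv hP j0 hz uj0) => //; lia.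
  by apply: (mixed_rise_left_high derv hP j0 hz uj0) => //; lia.
Qed.

End Invariant.

Definition zpos_or_end (u : word) l := if l <= count_mem 0 u then zpos u l else (size u).+1.

Lemma zpos_next (u : word) l : 0 < l <= count_mem 0 u ->
  let z := zpos_or_end u l.+1 in
  [/\ zpos u l < z <= (size u).+1, forall t, zpos u l < t < z -> 0 < ltr u t
    & z <= size u -> ltr u z = 0].
Proof.
move=> hl z; have [hj uj0 hzj] := zposP hl.
have zj : zeros u (zpos u l) = l.
  have e : zpos u l = (zpos u l).-1 + 1 by lia.
  by rewrite {1}e zerosD hzj /= prednK ?uj0 /=; lia.
rewrite /z /zpos_or_end; case: ifP => hl1.
  have hl2 : 0 < l.+1 <= count_mem 0 u by lia.
  have [hz uz0 hzz] := zposP hl2.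
  have lt : zpos u l < zpos u l.+1.
    rewrite ltnNge; apply/negP => le.
    have := @leq_zeros u (zpos u l.+1).-1 (zpos u l).-1; rewrite hzz hzj; lia.
  split => //; first lia.
  have le : zpos u l <= (zpos u l.+1).-1 by lia.
  by move=> t ht; apply: (proj1 (zeros_eq_pos u le)); lia.
have zs : zeros u (size u) = l by rewrite zeros_size; lia.
have le : zpos u l <= size u by lia.
split; [lia | | lia].
by move=> t ht; apply: (proj1 (zeros_eq_pos u le)); lia.
Qed.

Lemma mixed_rises_size v (u : word) : mixed_rises v u (size u) = RISE u.
Proof.
rewrite RISEE; apply: eq_in_filter => i; rewrite mem_iota /mixed_rise => hi.
by case: ltnP => // h; have -> : (i == size u) = true by lia.
Qed.

Lemma mixed_rises_first_zero v n (u : word) : derangement v -> u \in Sh n v ->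
  mixed_rises v u (zpos_or_end u 1).-1 = RISEb u.
Proof.
move=> derv hu; have [su cnt hP] := ShP hu.
rewrite /mixed_rises (RISEbE derv hP); apply: eq_in_filter => i; rewrite mem_iota => hi.
rewrite /mixed_rise; case: ltnP => // hiz; case: eqP => //= ne.
have no_zero : zeros u (zpos_or_end u 1).-1 = zeros u 0.
  rewrite /zpos_or_end; case: ifP => h1; last first.
    by move/negbT: h1; rewrite -eqn0Ngt /= zeros_size => /eqP ->.
  by have [_ _ ->] := zposP (l := 1) h1.
have := proj1 (zeros_eq_pos u (leq0n _)) no_zero.
by move=> pos; apply: rise_riseb_pos => //; try lia; apply: pos; lia.
Qed.

Section Composition.

Variables (v : word) (n : nat).
Hypothesis derv : derangement v.

Let Phi_l s (w : word) := foldr (phi n (size v)) w s.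

Lemma foldr_phi_Sh s w : w \in Sh n v -> Phi_l s w \in Sh n v.
Proof. by move=> hw; elim: s => //= l s IH; apply: phi_Sh. Qed.

Lemma foldr_phi_inj s w1 w2 : w1 \in Sh n v -> w2 \in Sh n v -> Phi_l s w1 = Phi_l s w2 -> w1 = w2.
Proof.
move=> h1 h2; elim: s => //= l s IH e; apply: IH.
exact: (phi_inj derv (foldr_phi_Sh s h1) (foldr_phi_Sh s h2) e).
Qed.

Lemma PhiE w : size v <= n -> Phi n (size v) w = Phi_l (iota 1 (n - size v)) w.
Proof.
move=> hvn; have out s : all (fun l => n - size v < l) s -> Phi_l s w = w.
  by elim: s => //= l s IH /andP[hl hs]; rewrite IH // phi_out //; lia.
rewrite /Phi -[in iota 1 n](subnK hvn) iotaD foldr_cat [X in foldr _ X]out //.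
by apply/allP => l; rewrite mem_iota; lia.
Qed.

Lemma mixed_rises_foldr_phi w b : w \in Sh n v -> b <= n - size v ->
  let u := Phi_l (iota (n - size v - b).+1 b) w in
  mixed_rises v u (zpos_or_end u (n - size v - b).+1).-1 = RISE w.
Proof.
move=> hw; have [sw cw _] := ShP hw.
elim: b => [|b IH] hb u.
  by rewrite /u /= /zpos_or_end cw ifF ?mixed_rises_size //; lia.
set a := n - size v - b.+1; have ea : n - size v - b = a.+1 by lia.
rewrite ea in IH; move: {IH}(IH (ltnW hb)) => /=.
set u0 := Phi_l (iota a.+2 b) w => IH.
have hu0 : u0 \in Sh n v by apply: foldr_phi_Sh.
have [su0 cnt0 _] := ShP hu0.
have hl : 0 < a.+1 <= n - size v by lia.
have hl0 : 0 < a.+1 <= count_mem 0 u0 by rewrite cnt0.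
have [hz pos uz0] := zpos_next hl0; rewrite su0 in hz uz0.
have hu : u = phi n (size v) a.+1 u0 by [].
have [_ cnt _] := ShP (phi_Sh derv a.+1 hu0); rewrite -hu in cnt.
rewrite /zpos_or_end cnt ifT; last lia.
by rewrite hu -(mixed_rises_phi derv hu0 hl hz pos uz0).
Qed.

End Composition.

Lemma inj_in_onto (T : eqType) (P : pred T) (s : seq T) (f : T -> T) :
  {subset P <= s} -> {in P, forall x, f x \in P} -> {in P &, injective f} ->
  {in P, forall y, exists2 x, x \in P & f x = y}.
Proof.
move=> Ps fP finj y Py; set E := undup [seq x <- s | P x].
have memE x : (x \in E) = (x \in P) by rewrite mem_undup mem_filter andb_idr //; apply: Ps.
have uniq_fE : uniq (map f E).
  by rewrite map_inj_in_uniq ?undup_uniq // => x1 x2; rewrite !memE; apply: finj.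
have fE : {subset map f E <= E} by move=> _ /mapP[x xE ->]; rewrite memE fP // -memE.
have [_ eqE] := uniq_min_size uniq_fE fE (eq_leq (esym (size_map f E))).
have /mapP[x xE ->] : y \in map f E by rewrite eqE memE.
by exists x; rewrite -?memE.
Qed.

Fixpoint words_upto (M k : nat) : seq word :=
  if k is k'.+1 then [seq x :: s | x <- iota 0 M.+1, s <- words_upto M k'] else [:: [::]].

Lemma mem_words_upto M (s : word) : all (fun x => x <= M) s -> s \in words_upto M (size s).
Proof.
elim: s => [|x s IH]; first by rewrite inE.
case/andP => hx hs.
change (x :: s \in [seq y :: t | y <- iota 0 M.+1, t <- words_upto M (size s)]).
apply/allpairsP; exists (x, s); split => //=; last exact: IH.
by rewrite -[0 :: _]/(iota 0 M.+1) mem_iota; lia.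
Qed.

Lemma Sh_words_upto n v : derangement v -> {subset Sh n v <= words_upto (size v) n}.
Proof.
case/andP => hperm _ w hw; have [<- _ hP] := ShP hw; apply: mem_words_upto.
apply/allP => x xw; case: (posnP x) => [->//|px].
have : x \in v by rewrite -hP mem_filter px.
by rewrite (perm_mem hperm) mem_iota; lia.
Qed.

Theorem theorem1p1 (v : seq nat) (n : nat) :
  derangement v -> size v <= n ->
  [/\ {in Sh n v, forall w, Phi n (size v) w \in Sh n v},
      {in Sh n v &, injective (Phi n (size v))},
      {in Sh n v, forall w', exists2 w, w \in Sh n v & Phi n (size v) w = w'}
    & {in Sh n v, forall w, RISE w = RISEb (Phi n (size v) w)}].
Proof.
move=> derv hvn.
have Phi_Sh : {in Sh n v, forall w, Phi n (size v) w \in Sh n v}.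
  by move=> w hw; rewrite PhiE //; apply: foldr_phi_Sh.
have Phi_inj : {in Sh n v &, injective (Phi n (size v))}.
  by move=> w1 w2 h1 h2; rewrite !PhiE //; apply: foldr_phi_inj.
split => //; first exact: inj_in_onto (Sh_words_upto derv) Phi_Sh Phi_inj.
move=> w hw; have := mixed_rises_foldr_phi derv hw (leqnn (n - size v)).
rewrite subnn -PhiE // => <-.
exact: mixed_rises_first_zero derv (Phi_Sh w hw).
Qed.
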